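(* Under assumption (A), for every $\tau>0$, with probability at least $$1-\sigma\exp\Big(-\min_{g\in\{0,\dots,G\}}\Big[\nu_g n_g-\log(G+1),\ \frac{\tau^2}{\eta_g^2k^2}\Big]\Big)$$ we have, simultaneously for all $\boldsymbol{\delta}\in\bar{\mathcal{H}}$, $$\frac{2}{n}\boldsymbol{\omega}^T\mathbf{X}\boldsymbol{\delta}\le\sqrt{\frac{8K^2+4}{n}}\ \max_{g\in\{0,\dots,G\}}\Big(\zeta_g k\,\omega(\mathcal{A}_g)+\epsilon_g\sqrt{\log(G+1)}+\tau\Big),$$ where $\sigma_g,\nu_g,\eta_g,\zeta_g,\epsilon_g>0$ are group-dependent constants (those for which, for each $g$ and each $\tau>0$, with probability at least $1-\frac{\sigma_g}{G+1}\exp(-\min[\nu_gn_g-\log(G+1),\tau^2/(\eta_g^2k^2)])$ one has $\sqrt{n/n_g}\,\|\boldsymbol{\omega}_g\|_2\sup_{\mathbf{u}\in\mathcal{A}_g}\langle\mathbf{X}_g^T\boldsymbol{\omega}_g/\|\boldsymbol{\omega}_g\|_2,\mathbf{u}\rangle\le\sqrt{(2K^2+1)n}(\zeta_gk\omega(\mathcal{A}_g)+\epsilon_g\sqrt{\log(G+1)}+\tau)$), and $\sigma=\max_g\sigma_g$.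
   Context: Data enriched linear model: $G\ge1$, $p\ge1$. For $g\in\{1,\dots,G\}$, $\mathbf{X}_g\in\mathbb{R}^{n_g\times p}$ has rows $\mathbf{x}_{gi}^T$ and $\boldsymbol{\omega}_g\in\mathbb{R}^{n_g}$ has entries $\omega_{gi}$; $n=\sum_{g=1}^Gn_g$, $n_0:=n$, $\mathbf{X}_0$ and $\boldsymbol{\omega}_0=\boldsymbol{\omega}\in\mathbb{R}^n$ are the vertical stackings of the $\mathbf{X}_g$ and of the $\boldsymbol{\omega}_g$. $\mathbf{X}\in\mathbb{R}^{n\times(G+1)p}$ is the block matrix whose $g$-th block row ($g=1,\dots,G$) has $\mathbf{X}_g$ in block column $0$, $\mathbf{X}_g$ in block column $g$ and zeros elsewhere, so that $\boldsymbol{\omega}^T\mathbf{X}\boldsymbol{\delta}=\sum_{g=1}^G\boldsymbol{\omega}_g^T\mathbf{X}_g(\boldsymbol{\delta}_0+\boldsymbol{\delta}_g)$. For $g\in\{0,\dots,G\}$, $f_g$ is convex, $\boldsymbol{\beta}_g^*\in\mathbb{R}^p$, $\mathcal{C}_g$ is the cone generated by $\{\boldsymbol{\delta}:f_g(\boldsymbol{\beta}_g^*+\boldsymbol{\delta})\le f_g(\boldsymbol{\beta}_g^* )\}$, $\mathcal{A}_g=\mathcal{C}_g\cap\mathbb{S}^{p-1}$, and $\bar{\mathcal{H}}=\{\boldsymbol{\delta}=(\boldsymbol{\delta}_0^T,\dots,\boldsymbol{\delta}_G^T)^T:\boldsymbol{\delta}_g\in\mathcal{C}_g,\ \sum_{g=0}^G\sqrt{n_g/n}\|\boldsymbol{\delta}_g\|_2=1\}$.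 Gaussian width $\omega(\mathcal{V})=\mathbb{E}\sup_{\mathbf{u}\in\mathcal{V}}\langle\mathbf{h},\mathbf{u}\rangle$, $\mathbf{h}\sim N(0,I_p)$. Assumption (A): rows $\mathbf{x}_{gi}$ i.i.d. zero-mean isotropic sub-Gaussian with $\|\mathbf{x}\|_{\psi_2}\le k$; noise entries $\omega_{gi}$ i.i.d. zero-mean unit-variance sub-Gaussian with $\|\omega_{gi}\|_{\psi_2}\le K$ ($\|\cdot\|_{\psi_2}$ the sub-Gaussian norm). *)

From HB Require Import structures.
From mathcomp Require Import all_boot all_order all_algebra.
From mathcomp Require Import all_classical all_reals all_analysis.
Set Implicit Arguments. Unset Strict Implicit. Unset Printing Implicit Defensive.
Import Order.TTheory GRing.Theory Num.Theory.
Local Open Scope classical_set_scope.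
Local Open Scope ring_scope.

Section defs.
Context {R : realType} {p : nat}.

Definition dotp (u v : 'rV[R]_p) : R := \sum_(j < p) u 0 j * v 0 j.
Definition norm2 (v : 'rV[R]_p) : R := Num.sqrt (\sum_(j < p) v 0 j ^+ 2).

Definition convex_fn (f : 'rV[R]_p -> R) : Prop :=
  forall (x y : 'rV[R]_p) (t : R), 0 <= t <= 1 ->
    f (t *: x + (1 - t) *: y) <= t * f x + (1 - t) * f y.

Definition cone_gen (f : 'rV[R]_p -> R) (b : 'rV[R]_p) : set 'rV[R]_p :=
  [set v | exists t : R, exists d : 'rV[R]_p, 0 <= t /\ f (b + d) <= f b /\ v = t *: d].

Definition sphere_part (C : set 'rV[R]_p) : set 'rV[R]_p := [set u | C u /\ norm2 u = 1].
End defs.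

Local Open Scope ereal_scope.
Section prob.
Context {R : realType} {p : nat} {d : measure_display} {T : measurableType d}.
Variable P : probability T R.

Definition psi2_norm (Y : T -> R) : \bar R :=
  ereal_inf [set t%:E | t in [set t : R | (0 < t)%R /\
     \int[P]_w (expR (Y w ^+ 2 / t ^+ 2))%:E <= 2%:E]].

Definition subg_vec_le (x : T -> 'rV[R]_p) (k : R) : Prop :=
  forall u : 'rV[R]_p, norm2 u = 1%R -> psi2_norm (fun w => dotp (x w) u) <= k%:E.

Definition rect (A : 'I_p -> set R) : set 'rV[R]_p := [set v | forall j, A j (v 0%R j)].

Definition meas_vec (x : T -> 'rV[R]_p) : Prop :=
  forall j, measurable_fun setT (fun w => x w 0%R j).

Definition indep_vecs (I : finType) (X : I -> T -> 'rV[R]_p) : Prop :=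
  forall A : I -> 'I_p -> set R, (forall i j, measurable (A i j)) ->
    P (\bigcap_(i in [set: I]) (X i @^-1` rect (A i))) =
    \prod_(i : I) P (X i @^-1` rect (A i)).

Definition ident_vecs (I : finType) (X : I -> T -> 'rV[R]_p) : Prop :=
  forall (i i' : I) (A : 'I_p -> set R), (forall j, measurable (A j)) ->
    P (X i @^-1` rect A) = P (X i' @^-1` rect A).

Definition indep_rvs (I : finType) (X : I -> T -> R) : Prop :=
  forall A : I -> set R, (forall i, measurable (A i)) ->
    P (\bigcap_(i in [set: I]) (X i @^-1` A i)) = \prod_(i : I) P (X i @^-1` A i).

Definition ident_rvs (I : finType) (X : I -> T -> R) : Prop :=
  forall (i i' : I) (A : set R), measurable A -> P (X i @^-1` A) = P (X i' @^-1` A).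

Definition std_gaussian_vec (h : 'I_p -> T -> R) : Prop :=
  (forall j, measurable_fun setT (h j)) /\ indep_rvs h /\
  forall j (B : set R), measurable B -> P (h j @^-1` B) = normal_prob 0%R 1%R B.

Definition gauss_width (h : 'I_p -> T -> R) (V : set 'rV[R]_p) : \bar R :=
  \int[P]_w ereal_sup [set (dotp (\row_j h j w) u)%:E | u in V].
End prob.

Section model.
Context {R : realType} {p : nat} {T : Type} {G : nat} (n : 'I_G -> nat).
Local Open Scope ring_scope.
(* group index j : 'I_G.+1 ; j = 0 is the shared (stacked) group, lift ord0 g is group g+1 *)
Definition nsz (j : 'I_G.+1) : nat :=
  match unlift ord0 j with Some g => n g | None => (\sum_(g < G) n g)%N end.

Variables (x : forall g : 'I_G, 'I_(n g) -> T -> 'rV[R]_p)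
          (w : forall g : 'I_G, 'I_(n g) -> T -> R).

Definition XTw (j : 'I_G.+1) (t : T) : 'rV[R]_p :=
  match unlift ord0 j with
  | Some g => \sum_(i < n g) w i t *: x i t
  | None => \sum_(g < G) \sum_(i < n g) w i t *: x i t end.

Definition normw (j : 'I_G.+1) (t : T) : R :=
  match unlift ord0 j with
  | Some g => Num.sqrt (\sum_(i < n g) w i t ^+ 2)
  | None => Num.sqrt (\sum_(g < G) \sum_(i < n g) w i t ^+ 2) end.

Definition wXd (delta : 'I_G.+1 -> 'rV[R]_p) (t : T) : R :=
  \sum_(g < G) \sum_(i < n g) w i t * dotp (x i t) (delta ord0 + delta (lift ord0 g)).
End model.

Definition Hbar {R : realType} {p G : nat} (n : 'I_G -> nat)
  (f : 'I_G.+1 -> 'rV[R]_p -> R) (b : 'I_G.+1 -> 'rV[R]_p)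
  (delta : 'I_G.+1 -> 'rV[R]_p) : Prop :=
  (forall j, cone_gen (f j) (b j) (delta j)) /\
  (\sum_(j < G.+1) Num.sqrt ((nsz n j)%:R / (nsz n ord0)%:R) * norm2 (delta j) = 1)%R.

From HB Require Import structures.
From mathcomp Require Import all_boot all_order all_algebra.
From mathcomp Require Import all_classical all_reals all_analysis.
From mathcomp Require Import ring lra.
Import Order.TTheory GRing.Theory Num.Theory.
Local Open Scope classical_set_scope.
Local Open Scope ring_scope.

(* The randomness is entirely in the per-group bounds (assumption (A) and
   the convexity of the f_j enter only through them), which hold on events
   E_j with P(E_j) >= 1 - sig_j/(G+1) exp(-m_j); a union bound puts all of
   them on one event of probability >= 1 - sigma exp(-min_j m_j).  On that
   event the bound is deterministic: w^T X delta = sum_j <X_j^T w_j, delta_j>,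
   and since delta_j / |delta_j| lies in A_j, the j-th group bound controls
   <X_j^T w_j, delta_j> by |delta_j| sqrt(n_j/N) times the j-th right-hand
   side.  The constraint defining Hbar makes the weights sqrt(n_j/N)|delta_j|
   a convex combination, so the sum is at most the maximum over the groups. *)

Section euclidean.
Context {R : realType} {p : nat}.
Implicit Types u v : 'rV[R]_p.

Lemma dotpDr u v1 v2 : dotp u (v1 + v2) = dotp u v1 + dotp u v2.
Proof. by rewrite /dotp -big_split; apply: eq_bigr => j _; rewrite mxE mulrDr. Qed.

Lemma dotpZr u c v : dotp u (c *: v) = c * dotp u v.
Proof. by rewrite /dotp mulr_sumr; apply: eq_bigr => j _; rewrite mxE mulrCA. Qed.

Lemma dotpZl u c v : dotp (c *: u) v = c * dotp u v.
Proof. by rewrite /dotp mulr_sumr; apply: eq_bigr => j _; rewrite mxE mulrA. Qed.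

Lemma dotp0r u : dotp u 0 = 0.
Proof. by rewrite /dotp big1 // => j _; rewrite mxE mulr0. Qed.

Lemma dotp0l u : dotp 0 u = 0.
Proof. by rewrite /dotp big1 // => j _; rewrite mxE mul0r. Qed.

Lemma dotp_suml (I : Type) (r : seq I) (F : I -> 'rV[R]_p) v :
  dotp (\sum_(i <- r) F i) v = \sum_(i <- r) dotp (F i) v.
Proof.
rewrite /dotp exchange_big /=; apply: eq_bigr => j _.
by rewrite summxE mulr_suml.
Qed.

Lemma norm2_ge0 v : 0 <= norm2 v.
Proof. exact: sqrtr_ge0. Qed.

Lemma norm2Z c v : norm2 (c *: v) = `|c| * norm2 v.
Proof.
rewrite /norm2 -sqrtr_sqr -sqrtrM ?sqr_ge0 //; congr Num.sqrt.
by rewrite mulr_sumr; apply: eq_bigr => j _; rewrite mxE exprMn.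
Qed.

Lemma norm2_0 : norm2 (0 : 'rV[R]_p) = 0.
Proof. by rewrite /norm2 big1 ?sqrtr0 // => j _; rewrite mxE expr0n. Qed.

Lemma sqrt_psum_eq0 {I : finType} {F : I -> R} :
  (forall i, 0 <= F i) -> Num.sqrt (\sum_i F i) = 0 -> forall i, F i = 0.
Proof.
move=> F_ge0 /eqP; rewrite sqrtr_eq0 => sum_le0 i.
have sum0 : \sum_i F i = 0 by apply/eqP; rewrite eq_le sum_le0 sumr_ge0.
exact: (psumr_eq0P (fun i _ => F_ge0 i) sum0).
Qed.

Lemma sqrt_sum_sqr_eq0 {I : finType} {F : I -> R} :
  Num.sqrt (\sum_i F i ^+ 2) = 0 -> forall i, F i = 0.
Proof.
move=> /(sqrt_psum_eq0 (F := fun i => F i ^+ 2) (fun i => sqr_ge0 _)) F0 i.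
by apply/eqP; rewrite -sqrf_eq0 F0.
Qed.

Lemma norm2_eq0 v : norm2 v = 0 -> v = 0.
Proof. by move=> /sqrt_sum_sqr_eq0 v0; apply/rowP => j; rewrite mxE v0. Qed.

Lemma cone_genZ (f : 'rV[R]_p -> R) b c v :
  0 <= c -> cone_gen f b v -> cone_gen f b (c *: v).
Proof.
move=> c0 [s [e [s0 [fe ->]]]].
by exists (c * s), e; rewrite scalerA mulr_ge0.
Qed.

End euclidean.

Section sup_bounds.
Context {R : realType} {p : nat}.
Local Open Scope ereal_scope.

Lemma dotp_le_sphere_sup {C : set 'rV[R]_p} {X : 'rV[R]_p} {nw s : R}
    {B : \bar R} :
  (forall c v, (0 <= c)%R -> C v -> C (c *: v)) ->
  (0 < s)%R -> (0 <= nw)%R -> (nw = 0%R -> X = 0%R) ->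
  (s * nw)%:E * ereal_sup [set (dotp (nw^-1 *: X) u)%:E | u in sphere_part C]
    <= B ->
  forall v, C v -> (dotp X v)%:E <= (norm2 v / s)%:E * B.
Proof.
move=> Cscale s_gt0 nw_ge0 X0 supB v Cv.
have [->|v_neq0] := eqVneq v 0%R; first by rewrite dotp0r norm2_0 mul0r mul0e.
have nv_gt0 : (0 < norm2 v)%R.
  by rewrite lt_def norm2_ge0 andbT; apply: contra_neq v_neq0 => /norm2_eq0.
have B_ge0 : 0 <= (norm2 v / s)%:E by rewrite lee_fin divr_ge0 ?ltW.
have [nw0|nw_neq0] := eqVneq nw 0%R.
  rewrite X0 // dotp0l mule_ge0 //; apply: le_trans supB.
  by rewrite nw0 mulr0 mul0e.
pose u := (norm2 v)^-1 *: v.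
have Au : sphere_part C u.
  split; first by apply: Cscale; rewrite ?invr_ge0 ?norm2_ge0.
  by rewrite norm2Z ger0_norm ?invr_ge0 ?norm2_ge0 // mulVf // gt_eqF.
have -> : dotp X v = (norm2 v / s * (s * nw * dotp (nw^-1 *: X) u))%R.
  by rewrite dotpZr dotpZl; field; rewrite nw_neq0 !gt_eqF.
rewrite EFinM lee_wpmul2l //; apply: le_trans supB.
rewrite EFinM lee_wpmul2l ?lee_fin ?mulr_ge0 ?(ltW s_gt0) //.
by apply: ereal_sup_ubound; exists u.
Qed.

Lemma sum_le_convex_comb {I : finType} {a D : I -> R} {B : \bar R} :
  (forall i, 0 <= a i)%R -> (\sum_i a i = 1)%R ->
  (forall i, (D i)%:E <= (a i)%:E * B) -> (\sum_i D i)%:E <= B.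
Proof.
move=> a_ge0 a_sum1; case: B => [b||] DB.
- have Dle i : (D i <= a i * b)%R by rewrite -lee_fin EFinM.
  by rewrite lee_fin (le_trans (ler_sum _ (fun i _ => Dle i))) // -mulr_suml a_sum1 mul1r.
- exact: leey.
- have : (\sum_i a i != 0)%R by rewrite a_sum1 oner_neq0.
  rewrite psumr_neq0 // => /hasP[i _ a_gt0].
  by have := DB i; rewrite gt0_muleNy ?lte_fin // leeNy_eq.
Qed.

End sup_bounds.

Section design.
Context {R : realType} {p : nat} {T : Type} {G : nat} (n : 'I_G -> nat).
Variables (x : forall g : 'I_G, 'I_(n g) -> T -> 'rV[R]_p)
          (w : forall g : 'I_G, 'I_(n g) -> T -> R).

Lemma nsz_gt0 : (0 < G)%N -> (forall g, 0 < n g)%N -> forall j, (0 < nsz n j)%N.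
Proof.
move=> G0 n0 j; rewrite /nsz; case: unlift => [g|] //.
by rewrite (bigD1 (Ordinal G0)) //= ltn_addr.
Qed.

Lemma wXd_sum_XTw delta t :
  wXd x w delta t = \sum_(j < G.+1) dotp (XTw x w j t) (delta j).
Proof.
rewrite big_ord_recl /XTw unlift_none.
under [X in _ = _ + X]eq_bigr => g _ do rewrite liftK.
rewrite /wXd dotp_suml -big_split /=; apply: eq_bigr => g _.
rewrite dotp_suml dotp_suml -big_split /=; apply: eq_bigr => i _.
by rewrite dotpDr mulrDr !dotpZl.
Qed.

Lemma normw_ge0 j t : 0 <= normw w j t.
Proof. by rewrite /normw; case: unlift => *; exact: sqrtr_ge0. Qed.

Lemma normw_eq0 j t : normw w j t = 0 -> XTw x w j t = 0.
Proof.
rewrite /normw /XTw; case: unlift => [g /sqrt_sum_sqr_eq0 w0|].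
  by rewrite big1 // => i _; rewrite w0 scale0r.
move=> /(sqrt_psum_eq0 (fun g => sumr_ge0 _ (fun i _ => sqr_ge0 (w g i t)))) w0.
rewrite big1 // => g _; rewrite big1 // => i _.
by rewrite (sqrt_sum_sqr_eq0 (F := fun i => w g i t) _ i) ?w0 ?sqrtr0 ?scale0r.
Qed.

Lemma wXd_le_max_group_bound (f : 'I_G.+1 -> 'rV[R]_p -> R)
    (beta : 'I_G.+1 -> 'rV[R]_p) (S : R) (B : 'I_G.+1 -> \bar R) t delta :
  (forall j, 0 < nsz n j)%N -> 0 < S ->
  (forall j, ((Num.sqrt ((nsz n ord0)%:R / (nsz n j)%:R) * normw w j t)%:E *
      ereal_sup [set (dotp ((normw w j t)^-1 *: XTw x w j t) u)%:E
                | u in sphere_part (cone_gen (f j) (beta j))] <= S%:E * B j)%E) ->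
  Hbar n f beta delta ->
  ((wXd x w delta t)%:E <= S%:E * \big[Order.max/-oo]_j B j)%E.
Proof.
move=> nsz_gt0 S_gt0 groupB [delta_cone delta_sum].
rewrite wXd_sum_XTw; apply: (sum_le_convex_comb _ delta_sum) => [j|j].
  by rewrite mulr_ge0 ?sqrtr_ge0 ?norm2_ge0.
have s_gt0 : (0 : R) < Num.sqrt ((nsz n ord0)%:R / (nsz n j)%:R).
  by rewrite sqrtr_gt0 divr_gt0 ?ltr0n.
have -> : Num.sqrt ((nsz n j)%:R / (nsz n ord0)%:R) * norm2 (delta j) =
          norm2 (delta j) / Num.sqrt ((nsz n ord0)%:R / (nsz n j)%:R).
  by rewrite mulrC -sqrtrV ?divr_ge0 ?invf_div.
apply: le_trans (dotp_le_sphere_sup (@cone_genZ _ _ (f j) (beta j)) s_gt0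
  (normw_ge0 _ _) (@normw_eq0 _ _) (groupB j) _ (delta_cone j)) _.
apply: lee_wpmul2l; first by rewrite lee_fin divr_ge0 ?norm2_ge0 ?ltW.
by apply: lee_wpmul2l; [rewrite lee_fin ltW | exact: le_bigmax].
Qed.

End design.

Section union_bound.
Context {R : realType} {d : measure_display} {T : measurableType d}.
Variable P : probability T R.
Local Open Scope ereal_scope.

Lemma probability_ge1B (E : set T) (c : R) :
  measurable E -> ((1 - c)%:E <= P E) = (P (~` E) <= c%:E).
Proof.
move=> mE; rewrite probability_setC // -(fineK (fin_num_measure P _ mE)).
by rewrite -EFinB !lee_fin !lerBlDr addrC.
Qed.

Lemma probability_bigsetI_ge (I : finType) (E : I -> set T) (c : I -> R) :
  (forall i, measurable (E i)) -> (forall i, (1 - c i)%:E <= P (E i)) ->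
  (1 - \sum_i c i)%:E <= P (\big[setI/setT]_i E i).
Proof.
move=> mE PE; rewrite probability_ge1B; last exact: bigsetI_measurable.
rewrite -sumEFin.
suff [] : measurable (\big[setI/setT]_i E i) /\
          P (~` \big[setI/setT]_i E i) <= \sum_i (c i)%:E by [].
apply: (big_ind2 (fun S e => measurable S /\ P (~` S) <= e)).
- by rewrite setCT measure0.
- move=> S1 e1 S2 e2 [mS1 PS1] [mS2 PS2]; split; first exact: measurableI.
  rewrite setCI (le_trans (measureU2 _ _ _)) ?leeD //; exact: measurableC.
- by move=> i _; rewrite -probability_ge1B.
Qed.

End union_bound.

Lemma sum_avg_expR_le (R : realType) (G : nat) (s m : 'I_G.+1 -> R) :
  (forall j, 0 <= s j) ->
  \sum_j s j / G.+1%:R * expR (- m j) <=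
  \big[Num.max/0]_j s j * expR (- \big[Num.min/m ord0]_j m j).
Proof.
move=> s_ge0; set smax := \big[Num.max/0]_j s j; set mmin := \big[Num.min/_]_j _.
apply: (@le_trans _ _ (\sum_(j < G.+1) smax / G.+1%:R * expR (- mmin))).
  apply: ler_sum => j _; apply: ler_pM; rewrite ?divr_ge0 ?expR_ge0 //.
    by rewrite ler_wpM2r ?invr_ge0 // le_bigmax.
  by rewrite ler_expR lerN2 bigmin_le.
by rewrite sumr_const card_ord -[_ *+ _]mulr_natr mulrAC mulfVK ?pnatr_eq0.
Qed.

Lemma sqrtr_4mul_div (R : rcfType) (a N : R) : 0 <= a -> 0 < N ->
  Num.sqrt (4 * a / N) = 2 / N * Num.sqrt (a * N).
Proof.
move=> a_ge0 N_gt0.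
rewrite -[RHS]ger0_norm; last by rewrite mulr_ge0 ?divr_ge0 ?sqrtr_ge0 ?(ltW N_gt0).
rewrite -sqrtr_sqr exprMn sqr_sqrtr ?mulr_ge0 ?(ltW N_gt0) //.
by congr Num.sqrt; field; rewrite gt_eqF.
Qed.

Theorem theorem3 (R : realType)
  (d : measure_display) (T : measurableType d) (P : probability T R)
  (dQ : measure_display) (Om : measurableType dQ) (Q : probability Om R)
  (G p : nat) (n : 'I_G -> nat)
  (x : forall g : 'I_G, 'I_(n g) -> T -> 'rV[R]_p)
  (w : forall g : 'I_G, 'I_(n g) -> T -> R)
  (k K : R) (f : 'I_G.+1 -> 'rV[R]_p -> R) (beta : 'I_G.+1 -> 'rV[R]_p)
  (h : 'I_p -> Om -> R)
  (sig nu eta zeta eps : 'I_G.+1 -> R) :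
  let N : R := (nsz n ord0)%:R in
  let A (j : 'I_G.+1) := sphere_part (cone_gen (f j) (beta j)) in
  let Wd (j : 'I_G.+1) := gauss_width Q h (A j) in
  let logG : R := ln (G.+1)%:R in
  (0 < G)%N -> (0 < p)%N -> (forall g, (0 < n g)%N) ->
  (* Assumption (A): design rows *)
  (forall g i, meas_vec (x g i)) ->
  indep_vecs P (fun s : {g : 'I_G & 'I_(n g)} => x (tag s) (tagged s)) ->
  ident_vecs P (fun s : {g : 'I_G & 'I_(n g)} => x (tag s) (tagged s)) ->
  (forall g i j, P.-integrable setT (fun t => (x g i t 0 j)%:E) /\
                 (\int[P]_t (x g i t 0 j)%:E = 0)%E) ->
  (forall g i (j l : 'I_p),
     (\int[P]_t (x g i t 0 j * x g i t 0 l)%:E = (if j == l then 1 else 0)%:E)%E) ->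
  (forall g i, subg_vec_le P (x g i) k) ->
  (* Assumption (A): noise *)
  (forall g i, measurable_fun setT (w g i)) ->
  indep_rvs P (fun s : {g : 'I_G & 'I_(n g)} => w (tag s) (tagged s)) ->
  ident_rvs P (fun s : {g : 'I_G & 'I_(n g)} => w (tag s) (tagged s)) ->
  (forall g i, P.-integrable setT (fun t => (w g i t)%:E) /\
               (\int[P]_t (w g i t)%:E = 0)%E) ->
  (forall g i, (\int[P]_t (w g i t ^+ 2)%:E = 1)%E) ->
  (forall g i, (psi2_norm P (w g i) <= K%:E)%E) ->
  (* convex f_g ; Gaussian vector used for the Gaussian width *)
  (forall j, convex_fn (f j)) ->
  std_gaussian_vec Q h ->
  (* group-dependent constants and their defining per-group bound *)
  (forall j, 0 < sig j /\ 0 < nu j /\ 0 < eta j /\ 0 < zeta j /\ 0 < eps j) ->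
  (forall (j : 'I_G.+1) (tau : R), 0 < tau ->
     exists E : set T, measurable E /\
       E `<=` [set t | ((Num.sqrt (N / (nsz n j)%:R) * normw w j t)%:E *
                          ereal_sup [set (dotp ((normw w j t)^-1 *: XTw x w j t) u)%:E
                                    | u in A j]
                        <= (Num.sqrt ((2 * K ^+ 2 + 1) * N))%:E *
                           ((zeta j * k)%:E * Wd j + (eps j * Num.sqrt logG + tau)%:E))%E] /\
       ((1 - sig j / (G.+1)%:R *
             expR (- Num.min (nu j * (nsz n j)%:R - logG)
                             (tau ^+ 2 / (eta j ^+ 2 * k ^+ 2))))%:E <= P E)%E) ->
  let sigma := \big[Num.max/0]_(j < G.+1) sig j in
  forall tau : R, 0 < tau ->
    let m (j : 'I_G.+1) := Num.min (nu j * (nsz n j)%:R - logG)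
                                   (tau ^+ 2 / (eta j ^+ 2 * k ^+ 2)) in
    exists E : set T, measurable E /\
      E `<=` [set t | forall delta : 'I_G.+1 -> 'rV[R]_p, Hbar n f beta delta ->
                ((2 / N * wXd x w delta t)%:E
                 <= (Num.sqrt ((8 * K ^+ 2 + 4) / N))%:E *
                    \big[Order.max/-oo]_(j < G.+1)
                       ((zeta j * k)%:E * Wd j + (eps j * Num.sqrt logG + tau)%:E))%E] /\
      ((1 - sigma * expR (- \big[Num.min/m ord0]_(j < G.+1) m j))%:E <= P E)%E.
Proof.
move=> N A Wd logG G_gt0 _ n_gt0 _ _ _ _ _ _ _ _ _ _ _ _ _ _ const_gt0 groupE.
move=> sigma tau tau_gt0 m.
have /choice [E HE] := fun j => groupE j tau tau_gt0.
have nszj_gt0 := nsz_gt0 n G_gt0 n_gt0.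
have N_gt0 : 0 < N by rewrite ltr0n.
have K2_gt0 : 0 < 2 * K ^+ 2 + 1 by have := sqr_ge0 K; lra.
have S_gt0 : 0 < Num.sqrt ((2 * K ^+ 2 + 1) * N) by rewrite sqrtr_gt0 mulr_gt0.
have EsubE j : \big[setI/setT]_i E i `<=` E j by rewrite (bigD1 j) //; exact: subIsetl.
exists (\big[setI/setT]_j E j); split; [|split].
- by apply: bigsetI_measurable => j _; exact: (HE j).1.
- move=> t Et delta Hdelta /=.
  have -> : 8 * K ^+ 2 + 4 = 4 * (2 * K ^+ 2 + 1) by ring.
  rewrite sqrtr_4mul_div ?(ltW K2_gt0) // !(EFinM (2 / N)) -muleA.
  apply: lee_wpmul2l; first by rewrite lee_fin divr_ge0 ?ltW.
  move: Hdelta; apply: wXd_le_max_group_bound => // j.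
  exact: (HE j).2.1 t (EsubE j t Et).
- apply: le_trans (probability_bigsetI_ge P _ _ _ (fun j => (HE j).1)
                                            (fun j => (HE j).2.2)).
  rewrite lee_fin lerB // sum_avg_expR_le // => j.
  by case: (const_gt0 j) => /ltW.
Qed.
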